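(* Let $k\ge 1$ and $m\ge 0$ be integers such that $2^{m+\nu_2(k)}>k$. Then the smallest integer $n\ge k$ such that $2^m$ divides $\binom{n}{k}$ is $n=2^{m+\nu_2(k)}$.
   Context: $\nu_2(x)$ denotes the 2-adic valuation of a positive integer $x$, i.e. the exponent of the largest power of $2$ dividing $x$. *)

From mathcomp Require Import all_boot.
Definition nu2 (x : nat) : nat := logn 2 x.

(* Kummer: nu_2 C(n, k) is the number of carries when adding k and n - k in
   base 2.  No carry can occur at a position i <= nu_2 k, since the low bits of
   k vanish there, nor at a position i >= m + nu_2 k when n < 2^(m + nu_2 k);
   hence fewer than m carries occur for k <= n < 2^(m + nu_2 k).  Conversely,
   N C(N-1, k-1) = k C(N, k) with N = 2^(m + nu_2 k) shows that 2^m divides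
   C(N, k). *)

From mathcomp Require Import all_boot.
From mathcomp Require Import zify.

Set Implicit Arguments.
Unset Strict Implicit.

(* Whether adding [k] and [l] in base [p] carries into position [i]. *)
Definition carry p k l i : bool := p ^ i <= k %% p ^ i + l %% p ^ i.

Lemma divn_add_carry p k l i :
  0 < p -> (k + l) %/ p ^ i = k %/ p ^ i + l %/ p ^ i + carry p k l i.
Proof. by move=> p_gt0; rewrite divnD // expn_gt0 p_gt0. Qed.

Lemma carry_dvdl p k l i : 0 < p -> p ^ i %| k -> carry p k l i = false.
Proof.
move=> p_gt0 /eqP dvd_k; rewrite /carry dvd_k add0n.
by rewrite leqNgt ltn_mod expn_gt0 p_gt0.
Qed.

Lemma carry_small p k l i : k + l < p ^ i -> carry p k l i = false.
Proof. by move=> kl_lt; rewrite /carry !modn_small; lia. Qed.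

Lemma logn_fact_upto p n N : prime p -> n <= N ->
  logn p n`! = \sum_(1 <= i < N.+1) n %/ p ^ i.
Proof.
move=> p_pr le_nN; rewrite logn_fact // [RHS](big_cat_nat _ (n := n.+1)) //=.
rewrite [X in _ + X]big1_seq ?addn0 // => i /andP[_].
rewrite mem_index_iota => /andP[lt_ni _].
by rewrite divn_small // (leq_trans lt_ni) // ltnW // ltn_expl ?prime_gt1.
Qed.

Lemma logn_bin_carries p k l : prime p ->
  logn p 'C(k + l, k) = \sum_(1 <= i < (k + l).+1) carry p k l i.
Proof.
move=> p_pr; have p_gt0 := prime_gt0 p_pr.
have := congr1 (logn p) (bin_fact (leq_addr l k)).
rewrite addKn !lognM ?muln_gt0 ?fact_gt0 ?bin_gt0 ?leq_addr //.
rewrite (logn_fact_upto p_pr (leq_addr l k)) (logn_fact_upto p_pr (leq_addl k l)).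
rewrite logn_fact //.
under [in RHS]eq_bigr => i _ do rewrite divn_add_carry //.
rewrite !big_split /=; lia.
Qed.

Lemma sum_nat_between_le a b lo hi :
  \sum_(lo <= i < hi) ((a < i) && (i < b) : nat) <= minn hi b - a.+1.
Proof.
elim: hi => [|hi IH]; first by rewrite big_geq.
case: (leqP lo hi) => [le_lo_hi|lt_hi_lo]; last by rewrite big_geq.
rewrite big_nat_recr //=.
by case: (boolP ((a < hi) && (hi < b))) => [/andP[? ?]|_]; lia.
Qed.

Lemma logn_bin_lt p k n m : prime p -> 0 < k -> k <= n ->
  n < p ^ (m + logn p k) -> logn p 'C(n, k) < m.
Proof.
move=> p_pr k_gt0 le_kn lt_n; set a := logn p k.
have p_gt0 := prime_gt0 p_pr.
have pa_le_k : p ^ a <= k by rewrite dvdn_leq // pfactor_dvdnn.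
have m_gt0 : 0 < m.
  by rewrite lt0n; apply: contraTneq lt_n => ->; rewrite -leqNgt (leq_trans pa_le_k).
have carry_between i : carry p k (n - k) i <= (a < i) && (i < m + a).
  case: (leqP i a) => [le_ia|lt_ai].
    by rewrite carry_dvdl // (dvdn_trans _ (pfactor_dvdnn p k)) // dvdn_exp2l.
  case: (leqP (m + a) i) => [le_mi|_]; last exact: leq_b1.
  by rewrite carry_small // subnKC // (leq_trans lt_n) // leq_exp2l ?prime_gt1.
rewrite -(subnKC le_kn) logn_bin_carries // subnKC //.
apply: leq_ltn_trans (leq_trans _ (sum_nat_between_le a (m + a) 1 n.+1)) _.
  by apply: leq_sum => i _; apply: carry_between.
lia.
Qed.

Lemma dvdn_bin_pfactor p e k : prime p -> 0 < k -> k <= p ^ e ->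
  p ^ (e - logn p k) %| 'C(p ^ e, k).
Proof.
move=> p_pr k_gt0 le_k; have p_gt0 := prime_gt0 p_pr.
have diag := mul_bin_diag (p ^ e) k.-1; rewrite prednK // in diag.
have := congr1 (logn p) diag.
rewrite !lognM ?expn_gt0 ?p_gt0 ?bin_gt0 // ?pfactorK //; last lia.
by rewrite pfactor_dvdn ?bin_gt0 //; lia.
Qed.

Theorem mainTheorem1 (k m : nat) (hk : 1 <= k) (hkm : k < 2 ^ (m + nu2 k)) :
  let N := 2 ^ (m + nu2 k) in
  [/\ k <= N, 2 ^ m %| 'C(N, k) &
      forall n : nat, k <= n -> 2 ^ m %| 'C(n, k) -> N <= n].
Proof.
rewrite /nu2 in hkm *; split; first exact: ltnW.
- by have := dvdn_bin_pfactor (isT : prime 2) hk (ltnW hkm); rewrite addnK.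
- move=> n le_kn dvd_bin; rewrite leqNgt; apply/negP => lt_n.
  have := logn_bin_lt (isT : prime 2) hk le_kn lt_n.
  by rewrite ltnNge -pfactor_dvdn ?bin_gt0 ?dvd_bin.
Qed.
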